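(* Let $D$ be a connection on a vector bundle $E$ and let $F\subseteq E$ be a parallel subbundle. If the induced connections on $F$ and on $E/F$ are exact, and the curvature of the induced connection on $E/F$ is injective, then $D$ is exact.
   Context: A subbundle $F$ is parallel if $D(\Gamma(F))\subseteq\Gamma(\Lambda^1\otimes F)$; then $D$ restricts to a connection on $F$ and descends to a connection on $E/F$. For a connection $D$ on $E$: $D^\wedge$ is the exterior covariant derivative $\phi_b{}^\alpha\mapsto D_{[a}\phi_{b]}{}^\alpha$, $\kappa=D^\wedge\circ D:E\to\Lambda^2\otimes E$ the curvature (assumed of constant rank). $D$ is exact if every section $\phi$ of $\Lambda^1\otimes E$ with $D^\wedge\phi=\kappa(\psi)$ for some section $\psi$ of $E$ is of the form $D\eta$ for some section $\eta$ of $E$. Statements are local. *)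

(* Local model of a connection on a vector bundle:
   the base is an open set U of R^n (points are row vectors 'rV[R]_n),
   E = U x R^k is trivialised, a connection is D = d + A with
   connection 1-form A : 'I_n -> (point -> 'M_k), and a subbundle F of rank r
   is given by a smooth frame Fr : point -> 'M_(r,k) of full row rank
   (F_x = row space of Fr x).  Sections are functions on the whole space of
   which only the restriction to the open set under consideration matters. *)
From HB Require Import structures.
From mathcomp Require Import all_boot all_order all_algebra.
From mathcomp Require Import all_classical all_reals all_analysis.
Set Implicit Arguments. Unset Strict Implicit. Unset Printing Implicit Defensive.
Import Order.TTheory GRing.Theory Num.Theory.
Import numFieldNormedType.Exports.
Local Open Scope classical_set_scope.
Local Open Scope ring_scope.

Section LocalConnections.
Variables (R : realType) (n k r : nat).
Local Notation P := 'rV[R]_n.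

Definition ecoord (a : 'I_n) : P := delta_mx 0 a.

Definition pd {W : normedModType R} (a : 'I_n) (f : P -> W) : P -> W :=
  fun x => 'D_(ecoord a) f x.

Fixpoint iter_pd {W : normedModType R} (s : seq 'I_n) (f : P -> W) : P -> W :=
  match s with [::] => f | a :: s' => pd a (iter_pd s' f) end.

Definition smooth_on {W : normedModType R} (V : set P) (f : P -> W) : Prop :=
  forall s : seq 'I_n,
    (forall x, V x -> iter_pd s f @ x --> iter_pd s f x) /\
    (forall x a, V x -> derivable (iter_pd s f) x (ecoord a)).

(* sections of E, Lambda^1 (x) E, Lambda^2 (x) E (in coordinates) *)
Definition sec := P -> 'rV[R]_k.
Definition sec1 := 'I_n -> P -> 'rV[R]_k.
Definition sec2 := 'I_n -> 'I_n -> P -> 'rV[R]_k.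

Definition smooth1 (V : set P) (phi : sec1) := forall a, smooth_on V (phi a).

Variable A : 'I_n -> P -> 'M[R]_k.

Definition Dsec (eta : sec) : sec1 :=
  fun a x => pd a eta x + eta x *m A a x.

(* exterior covariant derivative  phi_b |-> D_[a phi_b] *)
Definition Dwedge (phi : sec1) : sec2 :=
  fun a b x => 2^-1 *: ((pd a (phi b) x + phi b x *m A a x)
                       - (pd b (phi a) x + phi a x *m A b x)).

Definition curv (psi : sec) : sec2 := Dwedge (Dsec psi).

Definition exact_conn (U : set P) : Prop :=
  forall V : set P, open V -> V `<=` U ->
  forall (phi : sec1) (psi : sec), smooth1 V phi -> smooth_on V psi ->
  (forall a b x, V x -> Dwedge phi a b x = curv psi a b x) ->
  exists eta : sec, smooth_on V eta /\ forall a x, V x -> Dsec eta a x = phi a x.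

Variable Fr : P -> 'M[R]_(r, k).

Definition inF (x : P) (v : 'rV[R]_k) : bool := (v <= Fr x)%MS.

Definition parallel (U : set P) : Prop :=
  forall V : set P, open V -> V `<=` U ->
  forall eta : sec, smooth_on V eta -> (forall x, V x -> inF x (eta x)) ->
  forall a x, V x -> inF x (Dsec eta a x).

Definition exact_sub (U : set P) : Prop :=
  forall V : set P, open V -> V `<=` U ->
  forall (phi : sec1) (psi : sec), smooth1 V phi -> smooth_on V psi ->
  (forall a x, V x -> inF x (phi a x)) -> (forall x, V x -> inF x (psi x)) ->
  (forall a b x, V x -> Dwedge phi a b x = curv psi a b x) ->
  exists eta : sec, smooth_on V eta /\ (forall x, V x -> inF x (eta x)) /\
    forall a x, V x -> Dsec eta a x = phi a x.

(* the induced connection on E/F is exact; sections of (Lambda^p (x)) E/F are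
   represented by sections of (Lambda^p (x)) E modulo F, and the induced
   operators are the classes of D, D^wedge, kappa applied to representatives *)
Definition exact_quot (U : set P) : Prop :=
  forall V : set P, open V -> V `<=` U ->
  forall (phi : sec1) (psi : sec), smooth1 V phi -> smooth_on V psi ->
  (forall a b x, V x -> inF x (Dwedge phi a b x - curv psi a b x)) ->
  exists eta : sec, smooth_on V eta /\
    forall a x, V x -> inF x (Dsec eta a x - phi a x).

Definition curv_quot_injective (U : set P) : Prop :=
  forall V : set P, open V -> V `<=` U ->
  forall psi : sec, smooth_on V psi ->
  (forall a b x, V x -> inF x (curv psi a b x)) ->
  forall x, V x -> inF x (psi x).

End LocalConnections.

From HB Require Import structures.
From mathcomp Require Import all_boot all_order all_algebra.
From mathcomp Require Import all_classical all_reals all_analysis.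
Set Implicit Arguments. Unset Strict Implicit. Unset Printing Implicit Defensive.
Import Order.TTheory GRing.Theory Num.Theory.
Import numFieldNormedType.Exports.
Local Open Scope classical_set_scope.
Local Open Scope ring_scope.

(* Let [D^wedge phi = kappa psi]. Exactness of the quotient connection gives [eta1]
   with [D eta1 = phi] modulo F, so [phi1 := phi - D eta1] is F-valued and
   [D^wedge phi1 = kappa (psi - eta1)].  As F is parallel, [D^wedge phi1] is F-valued,
   hence so is the curvature of [psi - eta1] on E/F, and injectivity of that curvature
   puts [psi - eta1] in F.  Exactness of the connection on F then gives an F-valued
   [eta2] with [D eta2 = phi1], and [eta1 + eta2] is the required primitive of [phi]. *)

Lemma cvg_mxP (R : realType) (p q : nat) (T : Type) (F : set_system T)
    (FF : Filter F) (g : T -> 'M[R]_(p, q)) (l : 'M[R]_(p, q)) :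
  g @ F --> l <-> forall i j, (fun t => g t i j) @ F --> l i j.
Proof.
split=> [gl i j|gl]; first exact: (continuous_cvg _ (@coord_continuous R p q i j l) gl).
apply/cvg_mx_entourageP => E entE.
apply: filter_forall => i; apply: filter_forall => j.
have := (@cvg_entourageP R _ (fmap_filter _ FF) (l i j)).1 (gl i j) E entE.
by apply: (@filterS _ F FF) => t /mem_set.
Qed.

Section MatrixCalculus.
Variables (R : realType) (p q s : nat).

Lemma mulmx_entry_fun (T : Type)
    (u : T -> 'M[R]_(p, q)) (M : T -> 'M[R]_(q, s)) i j :
  (fun t => (u t *m M t) i j) = \sum_(l < q) (fun t => u t i l * M t l j).
Proof. by apply/funext => t; rewrite fct_sumE mxE. Qed.

Lemma cvg_mulmx (T : Type) (F : set_system T) (FF : Filter F)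
    (u : T -> 'M[R]_(p, q)) (M : T -> 'M[R]_(q, s))
    (a : 'M[R]_(p, q)) (b : 'M[R]_(q, s)) :
  u @ F --> a -> M @ F --> b -> (fun t => u t *m M t) @ F --> a *m b.
Proof.
move=> /cvg_mxP ua /cvg_mxP Mb; apply/cvg_mxP => i j.
rewrite mulmx_entry_fun mxE.
by elim/big_ind2: _ => [|f1 a1 f2 a2|l _]; [exact: cvg_cst|exact: cvgD|exact: cvgM].
Qed.

Variable V : normedModType R.
Implicit Types (u : V -> 'M[R]_(p, q)) (M : V -> 'M[R]_(q, s)).

Lemma derivable_mulmx u M x v : derivable u x v -> derivable M x v ->
  derivable (fun y => u y *m M y) x v.
Proof.
move=> /derivable_mxP du /derivable_mxP dM; apply/derivable_mxP => i j.
by rewrite mulmx_entry_fun; apply: derivable_sum => l; apply: derivableM.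
Qed.

Lemma derive_mulmx u M x v : derivable u x v -> derivable M x v ->
  'D_v (fun y => u y *m M y) x = 'D_v u x *m M x + u x *m 'D_v M x.
Proof.
move=> du dM; have /derivable_mxP du' := du; have /derivable_mxP dM' := dM.
apply/matrixP => i j; rewrite derive_mx; last exact: derivable_mulmx.
rewrite !mxE mulmx_entry_fun derive_sum; last by move=> l; apply: derivableM.
rewrite -big_split; apply: eq_bigr => l _ /=.
rewrite deriveM // (derive_mx du) (derive_mx dM) !mxE.
by rewrite addrC; congr (_ + _); exact: mulrC.
Qed.

End MatrixCalculus.

Section SmoothCalculus.
Variables (R : realType) (n : nat) (V : set 'rV[R]_n).
Hypothesis oV : open V.
Local Notation P := 'rV[R]_n.

Definition iter_pd_regular (W : normedModType R) (s : seq 'I_n) (f : P -> W) :=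
  (forall x, V x -> iter_pd s f @ x --> iter_pd s f x) /\
  (forall x a, V x -> derivable (iter_pd s f) x (ecoord R a)).

Definition smooth_upto (W : normedModType R) (m : nat) (f : P -> W) :=
  forall s, (size s <= m)%N -> iter_pd_regular s f.

Lemma smooth_onE (W : normedModType R) (f : P -> W) :
  smooth_on V f <-> forall m, smooth_upto m f.
Proof. by split=> [sf m s _|sf s]; [exact: sf|exact: (sf (size s))]. Qed.

Lemma smooth_on_derivable (W : normedModType R) (f : P -> W) x a :
  smooth_on V f -> V x -> derivable f x (ecoord R a).
Proof. by move=> sf Vx; apply: (sf [::]).2. Qed.

Lemma near_eq_on (T : Type) (f g : P -> T) x :
  (forall y, V y -> f y = g y) -> V x -> \forall y \near x, f y = g y.
Proof. by move=> fg Vx; apply: filterS (open_nbhs_nbhs (conj oV Vx)). Qed.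

Lemma iter_pd_rcons (W : normedModType R) s a (f : P -> W) :
  iter_pd s (pd a f) = iter_pd (rcons s a) f.
Proof. by elim: s => //= b s ->. Qed.

Lemma iter_pd_regular_rcons (W : normedModType R) s a (f : P -> W) :
  iter_pd_regular (rcons s a) f = iter_pd_regular s (pd a f).
Proof. by rewrite /iter_pd_regular iter_pd_rcons. Qed.

Lemma iter_pd_eq_on (W : normedModType R) (f g : P -> W) s x :
  (forall y, V y -> f y = g y) -> V x -> iter_pd s f x = iter_pd s g x.
Proof.
move=> fg; elim: s x => [|a s IHs] x Vx /=; first exact: fg.
by apply: near_eq_derive; apply: near_eq_on => // y; apply: IHs.
Qed.

Lemma iter_pd_regular_eq_on (W : normedModType R) s (f h : P -> W) :
  (forall y, V y -> iter_pd s f y = h y) ->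
  (forall x, V x -> h @ x --> h x) ->
  (forall x a, V x -> derivable h x (ecoord R a)) -> iter_pd_regular s f.
Proof.
move=> fh hc hd; split=> [x Vx|x a Vx].
  have /near_eq_cvg hf := near_eq_on (fun y Vy => esym (fh y Vy)) Vx.
  by rewrite fh //; apply: cvg_trans hf (hc x Vx).
by apply: near_eq_derivable (hd x a Vx); apply: near_eq_on => // y /fh.
Qed.

Lemma eq_on_iter_pd_regular (W : normedModType R) s (f g : P -> W) :
  (forall y, V y -> f y = g y) -> iter_pd_regular s f -> iter_pd_regular s g.
Proof.
move=> fg [fc fd]; apply: (iter_pd_regular_eq_on (h := iter_pd s f)) => // y Vy.
by rewrite (iter_pd_eq_on _ fg).
Qed.

Lemma smooth_upto_le (W : normedModType R) m m' (f : P -> W) :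
  (m <= m')%N -> smooth_upto m' f -> smooth_upto m f.
Proof. by move=> le_mm' sf s le_sm; apply/sf/(leq_trans le_sm). Qed.

Lemma smooth_upto_pd (W : normedModType R) m a (f : P -> W) :
  smooth_upto m.+1 f -> smooth_upto m (pd a f).
Proof.
by move=> sf s le_sm; rewrite -iter_pd_regular_rcons; apply: sf; rewrite size_rcons.
Qed.

Lemma smooth_upto_addZ (W : normedModType R) m (c : R) (f g : P -> W) :
  smooth_upto m f -> smooth_upto m g -> smooth_upto m (fun y => f y + c *: g y).
Proof.
move=> sf sg.
have iter_pdE s : (size s <= m)%N -> forall y, V y ->
    iter_pd s (fun y => f y + c *: g y) y = iter_pd s f y + c *: iter_pd s g y.
  elim: s => [|a s IHs] //= le_sm y Vy.
  have {}le_sm : (size s <= m)%N by apply: ltnW.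
  rewrite /pd (near_eq_derive _ (near_eq_on (IHs le_sm) Vy)).
  have df := (sf s le_sm).2 y a Vy; have dg := (sg s le_sm).2 y a Vy.
  by rewrite deriveD ?deriveZ //; exact: derivableZ.
move=> s le_sm; apply: iter_pd_regular_eq_on (iter_pdE s le_sm) _ _ => [x Vx|x a Vx].
  exact: cvgD ((sf s le_sm).1 x Vx) (cvgZ (cvg_cst c) ((sg s le_sm).1 x Vx)).
by apply: derivableD; [|apply: derivableZ]; [apply: (sf s le_sm).2|apply: (sg s le_sm).2].
Qed.

Lemma iter_pd_regular0_mulmx p q r
    (u : P -> 'M[R]_(p, q)) (M : P -> 'M[R]_(q, r)) :
  iter_pd_regular [::] u -> iter_pd_regular [::] M ->
  iter_pd_regular [::] (fun y => u y *m M y).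
Proof.
move=> [uc ud] [Mc Md]; split=> [x Vx|x a Vx] /=.
  exact: cvg_mulmx (uc x Vx) (Mc x Vx).
exact: derivable_mulmx (ud x a Vx) (Md x a Vx).
Qed.

Lemma smooth_upto_mulmx m p q r (u : P -> 'M[R]_(p, q)) (M : P -> 'M[R]_(q, r)) :
  smooth_upto m u -> smooth_upto m M -> smooth_upto m (fun y => u y *m M y).
Proof.
elim: m u M => [|m IHm] u M su sM s.
  by rewrite leqn0 => /nilP ->; apply: iter_pd_regular0_mulmx; [apply: su|apply: sM].
case/lastP: s => [_|t a]; first by apply: iter_pd_regular0_mulmx; [apply: su|apply: sM].
rewrite size_rcons ltnS iter_pd_regular_rcons => le_tm.
have pdE y : V y ->
    pd a u y *m M y + 1 *: (u y *m pd a M y) = pd a (fun y => u y *m M y) y.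
  move=> Vy; rewrite scale1r /pd derive_mulmx //.
    exact: (su [::] isT).2.
  exact: (sM [::] isT).2.
apply: eq_on_iter_pd_regular pdE _; apply: smooth_upto_addZ le_tm.
  by apply: (IHm); [exact: smooth_upto_pd|exact: smooth_upto_le (leqnSn m) sM].
by apply: IHm; [exact: smooth_upto_le (leqnSn m) su|exact: smooth_upto_pd].
Qed.

Lemma smooth_addZ (W : normedModType R) (c : R) (f g : P -> W) :
  smooth_on V f -> smooth_on V g -> smooth_on V (fun y => f y + c *: g y).
Proof.
by move=> /smooth_onE sf /smooth_onE sg; apply/smooth_onE => m; exact: smooth_upto_addZ.
Qed.

Lemma smooth_add (W : normedModType R) (f g : P -> W) :
  smooth_on V f -> smooth_on V g -> smooth_on V (fun y => f y + g y).
Proof.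
have -> : (fun y => f y + g y) = (fun y => f y + 1 *: g y).
  by apply/funext => y; rewrite scale1r.
exact: smooth_addZ.
Qed.

Lemma smooth_sub (W : normedModType R) (f g : P -> W) :
  smooth_on V f -> smooth_on V g -> smooth_on V (fun y => f y - g y).
Proof.
have -> : (fun y => f y - g y) = (fun y => f y + (-1) *: g y).
  by apply/funext => y; rewrite scaleN1r.
exact: smooth_addZ.
Qed.

Lemma smooth_pd (W : normedModType R) a (f : P -> W) :
  smooth_on V f -> smooth_on V (pd a f).
Proof. by move=> /smooth_onE sf; apply/smooth_onE => m; exact/smooth_upto_pd/sf. Qed.

Lemma smooth_mulmx p q r (u : P -> 'M[R]_(p, q)) (M : P -> 'M[R]_(q, r)) :
  smooth_on V u -> smooth_on V M -> smooth_on V (fun y => u y *m M y).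
Proof.
by move=> /smooth_onE su /smooth_onE sM; apply/smooth_onE => m; exact: smooth_upto_mulmx.
Qed.

End SmoothCalculus.

Lemma smooth_on_subset (R : realType) n (W : normedModType R) (U V : set 'rV[R]_n)
    (f : 'rV[R]_n -> W) :
  V `<=` U -> smooth_on U f -> smooth_on V f.
Proof.
by move=> VU sf s; split=> [x /VU Ux|x a /VU Ux]; [exact: (sf s).1|exact: (sf s).2].
Qed.

Section ConnectionCalculus.
Variables (R : realType) (n k : nat) (A : 'I_n -> 'rV[R]_n -> 'M[R]_k).
Variable V : set 'rV[R]_n.
Hypothesis oV : open V.
Hypothesis sA : forall a, smooth_on V (A a).

Lemma Dsec_smooth (eta : sec R n k) a : smooth_on V eta -> smooth_on V (Dsec A eta a).
Proof. by move=> se; apply: smooth_add (smooth_pd a se) (smooth_mulmx oV se (sA a)). Qed.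

Lemma DsecD (eta1 eta2 : sec R n k) a x :
  smooth_on V eta1 -> smooth_on V eta2 -> V x ->
  Dsec A (fun y => eta1 y + eta2 y) a x = Dsec A eta1 a x + Dsec A eta2 a x.
Proof.
move=> se1 se2 Vx; have de1 := smooth_on_derivable (a := a) se1 Vx.
have de2 := smooth_on_derivable (a := a) se2 Vx.
by rewrite /Dsec /pd (deriveD de1 de2) mulmxDl addrACA.
Qed.

Lemma DsecB (eta1 eta2 : sec R n k) a x :
  smooth_on V eta1 -> smooth_on V eta2 -> V x ->
  Dsec A (fun y => eta1 y - eta2 y) a x = Dsec A eta1 a x - Dsec A eta2 a x.
Proof.
move=> se1 se2 Vx; have de1 := smooth_on_derivable (a := a) se1 Vx.
have de2 := smooth_on_derivable (a := a) se2 Vx.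
by rewrite /Dsec /pd (deriveB de1 de2) mulmxBl addrACA opprD.
Qed.

Lemma DwedgeE (phi : sec1 R n k) a b x :
  Dwedge A phi a b x = 2^-1 *: (Dsec A (phi b) a x - Dsec A (phi a) b x).
Proof. by []. Qed.

Lemma Dwedge_eq_on (phi phi' : sec1 R n k) a b x :
  (forall c y, V y -> phi c y = phi' c y) -> V x ->
  Dwedge A phi a b x = Dwedge A phi' a b x.
Proof.
move=> phiE Vx; rewrite /Dwedge /pd (phiE a x Vx) (phiE b x Vx).
rewrite (near_eq_derive _ (near_eq_on oV (phiE a) Vx)).
by rewrite (near_eq_derive _ (near_eq_on oV (phiE b) Vx)).
Qed.

Lemma DwedgeB (phi phi' : sec1 R n k) a b x :
  smooth1 V phi -> smooth1 V phi' -> V x ->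
  Dwedge A (fun c y => phi c y - phi' c y) a b x =
  Dwedge A phi a b x - Dwedge A phi' a b x.
Proof.
move=> sphi sphi' Vx; rewrite !DwedgeE (DsecB a (sphi b) (sphi' b) Vx).
by rewrite (DsecB b (sphi a) (sphi' a) Vx) -scalerBr !opprD !opprK addrACA.
Qed.

Lemma curvB (psi eta : sec R n k) a b x :
  smooth_on V psi -> smooth_on V eta -> V x ->
  curv A (fun y => psi y - eta y) a b x = curv A psi a b x - curv A eta a b x.
Proof.
move=> spsi seta Vx.
have sDpsi : smooth1 V (Dsec A psi) by move=> c; exact: Dsec_smooth.
have sDeta : smooth1 V (Dsec A eta) by move=> c; exact: Dsec_smooth.
rewrite /curv -(DwedgeB a b sDpsi sDeta Vx).
by apply: Dwedge_eq_on => // c y Vy; rewrite DsecB.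
Qed.

End ConnectionCalculus.

Lemma parallel_Dwedge (R : realType) (n k r : nat) (A : 'I_n -> 'rV[R]_n -> 'M[R]_k)
    (Fr : 'rV[R]_n -> 'M[R]_(r, k)) (U V : set 'rV[R]_n) (phi : sec1 R n k) :
  parallel A Fr U -> open V -> V `<=` U -> smooth1 V phi ->
  (forall a x, V x -> inF Fr x (phi a x)) ->
  forall a b x, V x -> inF Fr x (Dwedge A phi a b x).
Proof.
move=> par oV VU sphi phiF a b x Vx; rewrite /inF DwedgeE.
apply/scalemx_sub/addmx_sub; rewrite ?eqmx_opp.
all: exact: (par V oV VU _ (sphi _) (phiF _)).
Qed.

Unset Implicit Arguments.

Theorem proposition2p8 (R : realType) (n k r : nat) (U : set 'rV[R]_n)
    (A : 'I_n -> 'rV[R]_n -> 'M[R]_k) (Fr : 'rV[R]_n -> 'M[R]_(r, k)) :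
  open U ->
  (forall a, smooth_on U (A a)) ->
  smooth_on U Fr ->
  (forall x, U x -> row_free (Fr x)) ->
  parallel A Fr U ->
  exact_sub A Fr U ->
  exact_quot A Fr U ->
  curv_quot_injective A Fr U ->
  exact_conn A U.
Proof.
move=> _ sAU _ _ par exS exQ inj V oV VU phi psi sphi spsi dphi.
have sA a : smooth_on V (A a) := smooth_on_subset VU (sAU a).
have [eta1 [seta1 eta1F]] : exists eta : sec R n k, smooth_on V eta /\
    forall a x, V x -> inF Fr x (Dsec A eta a x - phi a x).
  apply: (exQ V oV VU phi psi sphi spsi) => a b x Vx.
  by rewrite (dphi a b x Vx) subrr /inF sub0mx.
pose phi1 : sec1 R n k := fun a x => phi a x - Dsec A eta1 a x.
pose psi1 : sec R n k := fun x => psi x - eta1 x.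
have sDeta1 : smooth1 V (Dsec A eta1) := fun a => Dsec_smooth oV sA a seta1.
have sphi1 : smooth1 V phi1 := fun a => smooth_sub oV (sphi a) (sDeta1 a).
have spsi1 : smooth_on V psi1 := smooth_sub oV spsi seta1.
have phi1F a x : V x -> inF Fr x (phi1 a x).
  by move=> Vx; rewrite /inF /phi1 -opprB eqmx_opp; exact: eta1F.
have dphi1 a b x : V x -> Dwedge A phi1 a b x = curv A psi1 a b x.
  move=> Vx; rewrite (DwedgeB A a b sphi sDeta1 Vx) (dphi a b x Vx).
  by rewrite (curvB oV sA a b spsi seta1 Vx).
have psi1F : forall x, V x -> inF Fr x (psi1 x).
  apply: (inj V oV VU psi1 spsi1) => a b x Vx; rewrite -(dphi1 a b x Vx).
  exact: (parallel_Dwedge par oV VU sphi1 phi1F).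
have [eta2 [seta2 [_ deta2]]] := exS V oV VU phi1 psi1 sphi1 spsi1 phi1F psi1F dphi1.
exists (fun x => eta1 x + eta2 x); split; first exact: (smooth_add oV seta1 seta2).
move=> a x Vx; rewrite (DsecD A a seta1 seta2 Vx) (deta2 a x Vx).
by rewrite /phi1 addrC subrK.
Qed.
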